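(* In the basic contact-tracing model (described in the context), for every $T\in\mathbb{N}$, every probability distribution $D$ on $\{0,1,2,\dots\}$, every $p_T\in(0,1]$ and every $\beta>0$, the policy that at every step queries a node of smallest recency present in the frontier is optimal.
   Context: Basic model. Fix $T\in\mathbb{N}$, a probability distribution $D$ on $\{0,1,2,\dots\}$, a constant $p_T\in(0,1]$ and a discount parameter $\beta>0$. Every node (individual) has a recency $h\in\{0,1,\dots,T\}$. Each node (whether an index case or a child of an infected node) is infected independently with probability $p_T$. If a node of recency $h$ is infected, then for each $j\in\{0,\dots,h-1\}$ it has $Z_j\sim D$ children of recency $j$, with all these counts independent across $j$ and across nodes and independent of the infection statuses; an uninfected node has no children that can be accessed. Contact tracing: at step $t=0$ the frontier is a given finite multiset of index cases with known recencies. At each step $t=0,1,2,\dots$ while the frontier is nonempty, the tracer selects one node of the frontier and queries it, removing it from the frontier. The query reveals the node's infection status; if the node is infected and has recency $h$, benefit $e^{-\beta(h+t)}$ is collected and its children (with their recencies) are added to the frontier; if it is uninfected, benefit $0$ is collected and nothing is added. Nodes of the same recency are indistinguishable before they are queried, so a policy is a (possibly history-dependent) rule choosing at each step which recency present in the frontier to query. A policy is optimal if for every initial frontier it maximizes the expected total collected benefit $\mathbb{E}\big[\sum_{t\ge 0}(\text{benefit collected at step } t)\big]$ over all policies. *)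

From HB Require Import structures.
From mathcomp Require Import all_boot all_order all_algebra.
From mathcomp Require Import all_classical all_reals all_analysis.
Set Implicit Arguments. Unset Strict Implicit. Unset Printing Implicit Defensive.
Import Order.TTheory GRing.Theory Num.Theory.
Local Open Scope ring_scope.

(* A frontier is a finite multiset of recencies in {0,...,T}, represented by
   its multiplicity function. *)
Definition frontier (T : nat) := 'I_T.+1 -> nat.

(* One revealed observation: the queried recency h, together with
   None (node uninfected) or Some zs (node infected, zs`_j = number Z_j of
   children of recency j, for j < h). *)
Definition obs (T : nat) := ('I_T.+1 * option (seq nat))%type.

Definition policy (T : nat) := frontier T -> seq (obs T) -> 'I_T.+1.

Definition step_frontier (T : nat) (f : frontier T) (o : obs T) : frontier T :=
  fun i => (f i - (i == o.1) +
            (if o.2 is Some zs then (if (i < o.1)%N then nth 0%N zs i else 0%N)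
             else 0%N))%N.

Definition cur_frontier (T : nat) (f0 : frontier T) (hist : seq (obs T)) :
  frontier T := foldl (@step_frontier T) f0 hist.

Definition nonempty_frontier (T : nat) (f : frontier T) : bool :=
  [exists i : 'I_T.+1, (0 < f i)%N].

Definition valid_policy (T : nat) (pol : policy T) : Prop :=
  forall f0 hist, nonempty_frontier (cur_frontier f0 hist) ->
    (0 < cur_frontier f0 hist (pol f0 hist))%N.

Definition smallest_present (T : nat) (f : frontier T) : 'I_T.+1 :=
  odflt ord0 [pick i : 'I_T.+1 | (0 < f i)%N &&
                 [forall j : 'I_T.+1, (j < i)%N ==> (f j == 0%N)]].

Definition greedy_policy (T : nat) : policy T :=
  fun f0 hist => smallest_present (cur_frontier f0 hist).

Section Value.
Context {R : realType}.
Local Open Scope ereal_scope.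

(* E[g(Z_0,...,Z_{k-1})] for Z_j iid with law D (nonnegative g). *)
Fixpoint child_exp (D : nat -> R) (k : nat) (g : seq nat -> \bar R) : \bar R :=
  match k with
  | 0%N => g [::]
  | k'.+1 => \sum_(z <oo) ((D z)%:E * child_exp D k' (fun zs => g (z :: zs)))
  end.

(* value_n D p beta pol f0 n hist = expected benefit collected during the next
   n steps, when the history so far is hist (so the current step index is
   t = size hist) and policy pol is followed from initial frontier f0. *)
Fixpoint value_n (T : nat) (D : nat -> R) (p beta : R) (pol : policy T)
  (f0 : frontier T) (n : nat) (hist : seq (obs T)) : \bar R :=
  match n with
  | 0%N => 0
  | n'.+1 =>
    if nonempty_frontier (cur_frontier f0 hist) then
      let h := pol f0 hist in
      let t := size hist in
      ((1 - p)%R)%:E * value_n D p beta pol f0 n' (rcons hist (h, None))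
      + p%:E * ((expR (- beta * (nat_of_ord h + t)%:R))%:E
                + child_exp D h
                    (fun zs => value_n D p beta pol f0 n' (rcons hist (h, Some zs))))
    else 0
  end.

Definition total_value (T : nat) (D : nat -> R) (p beta : R) (pol : policy T)
  (f0 : frontier T) : \bar R :=
  ereal_sup (range (fun n => value_n D p beta pol f0 n [::])).

End Value.

From HB Require Import structures.
From mathcomp Require Import all_boot all_order all_algebra.
From mathcomp Require Import all_classical all_reals all_analysis.
From mathcomp Require Import zify.
Set Implicit Arguments. Unset Strict Implicit. Unset Printing Implicit Defensive.
Import Order.TTheory GRing.Theory Num.Theory.
Local Open Scope ring_scope.

(* Greedy is optimal by a one-step improvement argument.  With values discounted to the
   current step, induction on the horizon shows that every policy is dominated by "query
   once, then play greedily", so it suffices that querying a node of recency [x] first is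
   never better than querying the smallest recency [m] present.  Let [m < x] and let [Y] be
   the rest of the frontier.  Children have smaller recencies than their parents, so after
   either node is queried greedy exhausts the subtrees below recency [m] before it touches
   [Y]; by the induction hypothesis, "[m] first" may be assumed to query [x] next.  Subtrees
   evolve independently, so the order in which two of them are exhausted does not matter,
   and the two orders differ only in which benefit is collected at once and which one is
   delayed: collecting the larger one, that of recency [m], at once is better. *)

Create HintDb ge0.
Local Ltac nonneg := solve [auto 10 with ge0].

Section Tracing.
Variables (R : realType) (T : nat) (D : nat -> R) (p beta : R).
Hypothesis D_ge0 : forall k, 0 <= D k.
Hypothesis D_sum1 : (\sum_(k <oo) (D k)%:E = 1)%E.
Hypotheses (p_gt0 : 0 < p) (p_le1 : p <= 1) (beta_gt0 : 0 < beta).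

Local Open Scope ereal_scope.
Local Notation E := (child_exp D).

Lemma D_ge0E z : 0 <= (D z)%:E. Proof. by rewrite lee_fin. Qed.
Local Hint Resolve D_ge0E adde_ge0 mule_ge0 : ge0.

Lemma child_exp_ge0 k g : (forall zs, 0 <= g zs) -> 0 <= E k g.
Proof.
elim: k g => [|k IH] g g0 //=.
by apply: nneseries_ge0 => z _ _; nonneg.
Qed.
Local Hint Resolve child_exp_ge0 : ge0.

Lemma le_child_exp k g g' : (forall zs, 0 <= g zs) -> (forall zs, g zs <= g' zs) ->
  E k g <= E k g'.
Proof.
elim: k g g' => [|k IH] g g' g0 gg' //=.
apply: lee_nneseries => [z _ _|z _]; first by nonneg.
by apply: lee_wpmul2l; [exact: D_ge0E|exact: IH].
Qed.

Lemma eq_child_exp k g g' : (forall zs, size zs = k -> g zs = g' zs) -> E k g = E k g'.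
Proof.
elim: k g g' => [|k IH] g g' gg' /=; first exact: gg'.
apply: eq_eseriesr => z _; congr (_ * _); apply: IH => zs s.
by apply: gg'; rewrite /= s.
Qed.

Lemma child_expD k g g' : (forall zs, 0 <= g zs) -> (forall zs, 0 <= g' zs) ->
  E k (fun zs => g zs + g' zs) = E k g + E k g'.
Proof.
elim: k g g' => [|k IH] g g' g0 g'0 //=.
rewrite -nneseriesD => [|z _ _|z _ _]; try by nonneg.
by apply: eq_eseriesr => z _; rewrite IH // ge0_muleDr //; nonneg.
Qed.

Lemma child_expZ k (x : R) g : (forall zs, 0 <= g zs) ->
  E k (fun zs => x%:E * g zs) = x%:E * E k g.
Proof.
elim: k g => [|k IH] g g0 //=.
rewrite -nneseriesZl => [|z _]; last by nonneg.
by apply: eq_eseriesr => z _; rewrite IH // muleCA.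
Qed.

Lemma child_exp_cst k x : 0 <= x -> E k (fun=> x) = x.
Proof.
move=> x0; elim: k => [|k IH] //=; rewrite IH.
case: x x0 {IH} => [r| |] //= r0.
  under eq_eseriesr do rewrite muleC.
  by rewrite nneseriesZl ?D_sum1 ?mule1 // => z _; rewrite lee_fin.
have [z Dz_gt0] : exists z, (0 < D z)%R.
  apply/not_existsP => D_le0; move: D_sum1; rewrite eseries0 => [/eqP|i _ _].
    by rewrite eq_sym onee_eq0.
  by apply/eqP; rewrite eqe eq_le D_ge0 andbT leNgt; apply/negP/D_le0.
apply/eqP; rewrite eq_le leey /=.
have term_ge0 i : (0 <= i)%N -> true -> 0 <= (D i)%:E * +oo by move=> *; nonneg.
apply: le_trans (nneseries_lim_ge z.+1 term_ge0).
rewrite big_nat_recr //= gt0_muley ?lte_fin // addey // gt_eqF //.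
by apply: lt_le_trans ltNy0 _; apply: sume_ge0 => i _; nonneg.
Qed.

Lemma child_exp_affine k a (c : R) g : 0 <= a -> (0 <= c)%R -> (forall zs, 0 <= g zs) ->
  E k (fun zs => a + c%:E * g zs) = a + c%:E * E k g.
Proof.
move=> a0 c0 g0.
by rewrite child_expD ?child_exp_cst ?child_expZ // => zs; rewrite ?lee_fin; nonneg.
Qed.

Lemma nneseries_child_exp k (g : nat -> seq nat -> \bar R) : (forall i zs, 0 <= g i zs) ->
  \sum_(i <oo) E k (g i) = E k (fun zs => \sum_(i <oo) g i zs).
Proof.
elim: k g => [|k IH] g g0 //=.
rewrite (@nneseries_interchange _ (fun i z => (D z)%:E * E k (fun zs => g i (z :: zs))));
  last by nonneg.
apply: eq_eseriesr => z _.
by rewrite nneseriesZl ?IH // => i _; nonneg.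
Qed.

Lemma exchange_child_exp a b (g : seq nat -> seq nat -> \bar R) : (forall x y, 0 <= g x y) ->
  E a (fun x => E b (fun y => g x y)) = E b (fun y => E a (fun x => g x y)).
Proof.
elim: a g => [|a IH] g g0 //=.
transitivity (\sum_(z <oo) E b (fun y => (D z)%:E * E a (fun x => g (z :: x) y))).
  by apply: eq_eseriesr => z _; rewrite IH // child_expZ //; nonneg.
by rewrite nneseries_child_exp //; nonneg.
Qed.

Lemma child_exp_cat a b g : E (a + b) g = E a (fun x => E b (fun y => g (x ++ y))).
Proof. by elim: a g => [|a IH] g //=; apply: eq_eseriesr => z _; rewrite IH. Qed.

Definition disc : R := expR (- beta).

Lemma disc_ge0 : (0 <= disc)%R. Proof. exact: expR_ge0. Qed.

Lemma disc_le1 : (disc <= 1)%R.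
Proof. by rewrite /disc expR_le1 oppr_le0 ltW. Qed.

Lemma expR_disc k : (expR (- beta * k%:R) = disc ^+ k)%R.
Proof. exact: expRM_natr. Qed.

Lemma disc_ge0E : 0 <= disc%:E. Proof. by rewrite lee_fin disc_ge0. Qed.
Lemma discX_ge0E k : 0 <= (disc ^+ k)%:E.
Proof. by rewrite lee_fin exprn_ge0 ?disc_ge0. Qed.
Lemma p_ge0 : (0 <= p)%R. Proof. exact: ltW. Qed.
Lemma onemp_ge0 : (0 <= 1 - p)%R. Proof. by rewrite subr_ge0. Qed.
Lemma p_ge0E : 0 <= p%:E. Proof. by rewrite lee_fin p_ge0. Qed.
Lemma onemp_ge0E : 0 <= (1 - p)%:E. Proof. by rewrite lee_fin onemp_ge0. Qed.
Local Hint Resolve disc_ge0 p_ge0 onemp_ge0 disc_ge0E discX_ge0E p_ge0E onemp_ge0E : ge0.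

Definition mix (x y : \bar R) : \bar R := (1 - p)%:E * x + p%:E * y.

Lemma mix_ge0 x y : 0 <= x -> 0 <= y -> 0 <= mix x y.
Proof. by move=> *; rewrite /mix; nonneg. Qed.
Local Hint Resolve mix_ge0 : ge0.

Lemma le_mix x y x' y' : 0 <= x -> 0 <= y -> x <= x' -> y <= y' -> mix x y <= mix x' y'.
Proof. by move=> *; apply: leeD; apply: lee_wpmul2l; nonneg. Qed.

Lemma mixD x y x' y' : 0 <= x -> 0 <= y -> 0 <= x' -> 0 <= y' ->
  mix (x + x') (y + y') = mix x y + mix x' y'.
Proof. by move=> *; rewrite /mix !ge0_muleDr // addeACA. Qed.

Lemma mixZ (c : R) x y : 0 <= x -> 0 <= y -> mix (c%:E * x) (c%:E * y) = c%:E * mix x y.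
Proof.
move=> *; rewrite /mix ge0_muleDr; try by nonneg.
by rewrite muleCA [X in _ + X]muleCA.
Qed.

Lemma mix_id x : 0 <= x -> mix x x = x.
Proof.
by move=> x0; rewrite /mix -ge0_muleDl -?EFinD ?subrK ?mul1e; nonneg.
Qed.

Lemma mix_child_exp k g g' : (forall zs, 0 <= g zs) -> (forall zs, 0 <= g' zs) ->
  mix (E k g) (E k g') = E k (fun zs => mix (g zs) (g' zs)).
Proof. by move=> *; rewrite /mix child_expD ?child_expZ //; nonneg. Qed.

Lemma mixACA a b c d : 0 <= a -> 0 <= b -> 0 <= c -> 0 <= d ->
  mix (mix a b) (mix c d) = mix (mix a c) (mix b d).
Proof.
move=> *; rewrite /mix !ge0_muleDr; try by nonneg.
by rewrite !muleA -!EFinM [(p * (1 - p))%R]mulrC addeACA.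
Qed.

Local Notation fr := (frontier T).

Definition fr0 : fr := fun=> 0%N.
Definition fadd (A B : fr) : fr := fun i => (A i + B i)%N.
Definition fr1 (x : 'I_T.+1) : fr := fun i => nat_of_bool (i == x).
Definition fdel (K : fr) (x : 'I_T.+1) : fr := fun i => (K i - (i == x))%N.
Definition children (x : nat) (zs : seq nat) : fr :=
  fun i => if (i < x)%N then nth 0%N zs i else 0%N.
Definition upper_children (m h : nat) (e : seq nat) : fr :=
  fun i => if (m <= i < h)%N then nth 0%N e (i - m) else 0%N.

Definition below (x : nat) (K : fr) := forall i : 'I_T.+1, (0 < K i)%N -> (i < x)%N.
Definition above (x : nat) (Z : fr) := forall j : 'I_T.+1, (0 < Z j)%N -> (x <= j)%N.
Definition precedes (K Z : fr) :=
  forall i j : 'I_T.+1, (0 < K i)%N -> (0 < Z j)%N -> (i <= j)%N.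

Lemma fadd0r K : fadd K fr0 = K.
Proof. by apply: funext => i; rewrite /fadd addn0. Qed.

Lemma fadd0l K : fadd fr0 K = K.
Proof. by apply: funext => i; rewrite /fadd add0n. Qed.

Lemma fdel_fr1 x : fdel (fr1 x) x = fr0.
Proof. by apply: funext => i; rewrite /fdel /fr1 subnn. Qed.

Lemma fdelC f x y : fdel (fdel f x) y = fdel (fdel f y) x.
Proof. by apply: funext => i; rewrite /fdel -!subnDA addnC. Qed.

Lemma fdel_fadd_fr1 Z x : fdel (fadd Z (fr1 x)) x = Z.
Proof. by apply: funext => i; rewrite /fdel /fadd /fr1 addnK. Qed.

Lemma fdel_fr1_other f (m x : 'I_T.+1) : m != x -> (0 < f m)%N ->
  fdel f x = fadd (fdel (fdel f m) x) (fr1 m).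
Proof.
move=> mx fm; apply: funext => i; rewrite /fdel /fadd /fr1.
have [->|im] := eqVneq i m; first by rewrite (negbTE mx) /=; lia.
by case: (i == x) => /=; lia.
Qed.

Lemma step_frontierE (K : fr) x o : step_frontier K (x, o) =
  fadd (fdel K x) (if o is Some zs then children x zs else fr0).
Proof. by case: o => //; rewrite fadd0r; apply: funext => i; rewrite /step_frontier addn0. Qed.

Lemma above_fadd x A B : above x A -> above x B -> above x (fadd A B).
Proof. by move=> hA hB j; rewrite /fadd addn_gt0 => /orP[/hA|/hB]. Qed.

Lemma above_fr1 x (y : 'I_T.+1) : (x <= y)%N -> above x (fr1 y).
Proof. by move=> xy j; rewrite /fr1; case: eqP => // ->. Qed.

Lemma below_precedes x K Z : below x K -> above x Z -> precedes K Z.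
Proof. by move=> hK hZ i j /hK ix /hZ; apply/leq_trans/ltnW. Qed.

Lemma fr1_precedes (x : 'I_T.+1) Z : above x Z -> precedes (fr1 x) Z.
Proof. by move=> hZ i j; rewrite /fr1; case: eqP => // -> _ /hZ. Qed.

Lemma below_children x zs : below x (children x zs).
Proof. by move=> i; rewrite /children; case: ifP. Qed.

Lemma children_cat m h c e : size c = m -> (m <= h)%N ->
  children h (c ++ e) = fadd (children m c) (upper_children m h e).
Proof.
move=> <- mh; apply: funext => i; rewrite /children /upper_children /fadd nth_cat.
by case: (ltnP i (size c)) => im /=; [rewrite (leq_trans im mh) addn0|rewrite add0n].
Qed.

Lemma nonempty_frontier_pos (K : fr) i : (0 < K i)%N -> nonempty_frontier K.
Proof. by move=> Ki; apply/existsP; exists i. Qed.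

Lemma empty_frontier0 (K : fr) : ~~ nonempty_frontier K -> K = fr0.
Proof.
move=> /existsP K0; apply: funext => i; apply/eqP; rewrite -leqn0 leqNgt.
by apply/negP => Ki; apply: K0; exists i.
Qed.

Lemma smallest_presentP (K : fr) : nonempty_frontier K ->
  (0 < K (smallest_present K))%N /\
  forall j : 'I_T.+1, (j < smallest_present K)%N -> K j = 0%N.
Proof.
move=> /existsP [i0 Ki0]; rewrite /smallest_present.
case: pickP => [i /andP[Ki /forallP Kj]|none] /=.
  by split=> // j ji; apply/eqP; move: (Kj j); rewrite ji.
have [i Ki imin] := arg_minnP (fun i : 'I_T.+1 => nat_of_ord i) (Ki0 : (fun i => 0 < K i)%N i0).
move: (none i); rewrite Ki /=; move/negP; case; apply/forallP => j; apply/implyP => ji.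
by rewrite -leqn0 leqNgt; apply/negP => /imin; rewrite leqNgt ji.
Qed.

Lemma smallest_present_eq (K : fr) (i : 'I_T.+1) : (0 < K i)%N ->
  (forall j : 'I_T.+1, (j < i)%N -> K j = 0%N) -> smallest_present K = i.
Proof.
move=> Ki Kj; have [Ks Kmin] := smallest_presentP (nonempty_frontier_pos Ki).
apply/val_inj/eqP; rewrite /= eqn_leq.
apply/andP; split; rewrite leqNgt; apply/negP.
  by move=> /Kmin K0; move: Ki; rewrite K0.
by move=> /Kj K0; move: Ks; rewrite K0.
Qed.

Lemma smallest_present_fr1 x : smallest_present (fr1 x) = x.
Proof.
apply: smallest_present_eq => [|j jx]; first by rewrite /fr1 eqxx.
by rewrite /fr1; case: eqP => // jx'; rewrite jx' ltnn in jx.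
Qed.

Lemma nonempty_fr1 x : nonempty_frontier (fr1 x).
Proof. by apply: (@nonempty_frontier_pos _ x); rewrite /fr1 eqxx. Qed.

Definition reward (b : bool) (x : nat) : \bar R := if b then (disc ^+ x)%:E else 0.

Lemma reward_ge0 b x : 0 <= reward b x.
Proof. by case: b => /=; nonneg. Qed.
Local Hint Resolve reward_ge0 : ge0.

(* [b] is the infection status of the queried node and [C] the frontier of its children. *)
Definition query_exp (x : nat) (phi : bool -> fr -> \bar R) : \bar R :=
  mix (phi false fr0) (E x (fun zs => phi true (children x zs))).

Lemma query_exp_ge0 x phi : (forall b C, 0 <= phi b C) -> 0 <= query_exp x phi.
Proof. by move=> ?; rewrite /query_exp; nonneg. Qed.
Local Hint Resolve query_exp_ge0 : ge0.

Lemma le_query_exp x phi phi' : (forall b C, 0 <= phi b C) ->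
  (forall b C, below x C -> phi b C <= phi' b C) -> query_exp x phi <= query_exp x phi'.
Proof.
move=> ph0 ph; apply: le_mix; [by nonneg|by nonneg|by apply: ph => i|].
by apply: le_child_exp => // zs; apply/ph/below_children.
Qed.

Lemma eq_query_exp x phi phi' : (forall b C, below x C -> phi b C = phi' b C) ->
  query_exp x phi = query_exp x phi'.
Proof.
move=> ph; rewrite /query_exp ph; last by move=> i.
by congr mix; apply: eq_child_exp => zs _; apply/ph/below_children.
Qed.

Lemma query_expD x phi psi : (forall b C, 0 <= phi b C) -> (forall b C, 0 <= psi b C) ->
  query_exp x (fun b C => phi b C + psi b C) = query_exp x phi + query_exp x psi.
Proof. by move=> *; rewrite /query_exp child_expD // mixD //; nonneg. Qed.

Lemma query_expZ x (c : R) phi : (forall b C, 0 <= phi b C) ->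
  query_exp x (fun b C => c%:E * phi b C) = c%:E * query_exp x phi.
Proof. by move=> *; rewrite /query_exp child_expZ // mixZ //; nonneg. Qed.

Lemma query_exp_cst x c : 0 <= c -> query_exp x (fun _ _ => c) = c.
Proof. by move=> c0; rewrite /query_exp child_exp_cst // mix_id. Qed.

Lemma query_exp_reward x y psi : (forall b C, 0 <= psi b C) ->
  query_exp x (fun b C => reward b y + psi b C) = (p * disc ^+ y)%:E + query_exp x psi.
Proof.
move=> *; rewrite query_expD //; last by nonneg.
congr (_ + _); rewrite /query_exp /reward /= child_exp_cst ?discX_ge0E //.
by rewrite /mix mule0 add0e EFinM.
Qed.

Lemma query_exp_child_exp x k (psi : seq nat -> bool -> fr -> \bar R) :
  (forall zs b C, 0 <= psi zs b C) ->
  query_exp x (fun b C => E k (fun zs => psi zs b C)) = E k (fun zs => query_exp x (psi zs)).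
Proof.
by move=> *; rewrite /query_exp exchange_child_exp // mix_child_exp //; nonneg.
Qed.

Lemma exchange_query_exp x y (phi : bool -> fr -> bool -> fr -> \bar R) :
  (forall b C b' C', 0 <= phi b C b' C') ->
  query_exp x (fun b C => query_exp y (phi b C)) =
  query_exp y (fun b' C' => query_exp x (fun b C => phi b C b' C')).
Proof.
move=> ph0; rewrite {1}/query_exp -mix_child_exp; try by nonneg.
rewrite [RHS]/query_exp -mix_child_exp; try by nonneg.
by rewrite exchange_child_exp // mixACA; nonneg.
Qed.

(* The children of a node of recency [h] split into [C], those of recency below [m], and the
   counts [e] of those of recency in [[m, h)]. *)
Lemma query_exp_split m h phi : (m <= h)%N -> (forall b C, 0 <= phi b C) ->
  query_exp h phi = query_exp m (fun b C =>
    E (h - m) (fun e => phi b (fadd C (if b then upper_children m h e else fr0)))).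
Proof.
move=> mh ph0; rewrite /query_exp /= fadd0r child_exp_cst //; congr mix.
have -> : E h (fun zs => phi true (children h zs)) =
          E (m + (h - m)) (fun zs => phi true (children h zs)) by rewrite subnKC.
rewrite child_exp_cat; apply: eq_child_exp => c sc; apply: eq_child_exp => e _.
by rewrite (children_cat _ sc mh).
Qed.

(* [greedy_run true n K (fun=> 0)] is the expected benefit of the greedy policy during [n]
   steps from frontier [K], discounted to the current step.  With [r = false] no benefit is
   collected and [u k] is paid when the frontier becomes empty with [k] steps remaining. *)
Fixpoint greedy_run (r : bool) (n : nat) (K : fr) (u : nat -> \bar R) : \bar R :=
  if n is n'.+1 then
    if nonempty_frontier K then
      let x := smallest_present K in
      query_exp x (fun b C =>
        reward (r && b) x + disc%:E * greedy_run r n' (fadd (fdel K x) C) u)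
    else u n
  else 0.

Lemma greedy_run_ge0 r n K u : (forall k, 0 <= u k) -> 0 <= greedy_run r n K u.
Proof. by move=> u0; elim: n K => [|n IH] K //=; case: ifP; nonneg. Qed.
Local Hint Resolve greedy_run_ge0 : ge0.

Lemma le_greedy_run r n K u u' : (forall k, 0 <= u k) ->
  (forall k, (k <= n)%N -> u k <= u' k) -> greedy_run r n K u <= greedy_run r n K u'.
Proof.
move=> u0; elim: n K => [|n IH] K uu //=; case: ifP => _; last exact: uu.
apply: le_query_exp => [b C|b C _]; first by nonneg.
apply/leeD2l/lee_wpmul2l; first by nonneg.
by apply: IH => k kn; apply/uu/leqW.
Qed.

Lemma eq_greedy_run r n K u u' : (forall k, (0 < k)%N -> u k = u' k) ->
  greedy_run r n K u = greedy_run r n K u'.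
Proof.
move=> uu; elim: n K => [|n IH] K //=; case: ifP => _; last exact: uu.
by apply: eq_query_exp => b C _; rewrite IH.
Qed.

(* Descendants of [K] have smaller recencies than [K], hence than [Z], so greedy exhausts
   [K] before turning to [Z]. *)
Lemma greedy_run_fadd r n Z K u : precedes K Z ->
  greedy_run r n (fadd Z K) u = greedy_run r n K (fun k => greedy_run r k Z u).
Proof.
elim: n K => [|n IH] K KZ //=.
case nK: (nonempty_frontier K); last by rewrite (empty_frontier0 (negbT nK)) fadd0r.
have [Kx Kmin] := smallest_presentP nK; set x := smallest_present K in Kx Kmin *.
have ZKx : (0 < fadd Z K x)%N by rewrite /fadd addn_gt0 Kx orbT.
have -> : smallest_present (fadd Z K) = x.
  apply: smallest_present_eq => // j jx; rewrite /fadd Kmin // addn0.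
  apply/eqP; rewrite -leqn0 leqNgt; apply/negP => Zj.
  by move: (KZ _ _ Kx Zj); rewrite leqNgt jx.
rewrite (nonempty_frontier_pos ZKx); apply: eq_query_exp => b C Cx.
rewrite -IH; last first.
  move=> i j; rewrite /fadd /fdel addn_gt0 => /orP[Ki|/Cx ix] Zj.
    by apply: KZ Zj; apply: leq_trans Ki (leq_subr _ _).
  by apply/ltnW/(leq_trans ix)/(KZ _ _ Kx Zj).
congr (_ + _ * greedy_run _ _ _ _); apply: funext => i; rewrite /fadd /fdel.
by case: eqP => [->|_] /=; lia.
Qed.

Definition gval (n : nat) (K : fr) : \bar R := greedy_run true n K (fun=> 0).
Definition exhaust (K : fr) (v : nat -> \bar R) (n : nat) : \bar R := greedy_run false n K v.

Definition qval (n : nat) (Z : fr) (x : nat) : \bar R :=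
  query_exp x (fun b C => reward b x + disc%:E * gval n (fadd Z C)).

Lemma gval_ge0 n K : 0 <= gval n K.
Proof. exact: greedy_run_ge0. Qed.

Lemma exhaust_ge0 K v n : (forall k, 0 <= v k) -> 0 <= exhaust K v n.
Proof. exact: greedy_run_ge0. Qed.
Local Hint Resolve gval_ge0 exhaust_ge0 : ge0.

Lemma gvalS n K : nonempty_frontier K ->
  gval n.+1 K = qval n (fdel K (smallest_present K)) (smallest_present K).
Proof. by move=> nK; rewrite /gval /= nK. Qed.

Lemma exhaustS K v n : nonempty_frontier K -> (forall k, 0 <= v k) ->
  exhaust K v n.+1 = disc%:E * query_exp (smallest_present K)
    (fun _ C => exhaust (fadd (fdel K (smallest_present K)) C) v n).
Proof.
move=> nK v0; rewrite /exhaust /= nK -query_expZ; last by nonneg.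
by apply: eq_query_exp => b C _; rewrite /reward /= add0e.
Qed.

Lemma exhaust_empty K v n : ~~ nonempty_frontier K -> (0 < n)%N -> exhaust K v n = v n.
Proof. by move=> nK; case: n => //= n _; rewrite /exhaust /= (negbTE nK). Qed.

Lemma greedy_run_true n K u : (forall k, 0 <= u k) ->
  greedy_run true n K u = gval n K + exhaust K u n.
Proof.
move=> u0; elim: n K => [|n IH] K; first by rewrite add0e.
case nK: (nonempty_frontier K); last by rewrite /gval /exhaust /= nK add0e.
rewrite gvalS // exhaustS // /qval -query_expZ -?query_expD; try by nonneg.
rewrite /= nK; apply: eq_query_exp => b C _.
by rewrite IH ge0_muleDr ?addeA; nonneg.
Qed.

Lemma gval_fadd n Z K : precedes K Z ->
  gval n (fadd Z K) = gval n K + exhaust K (fun k => gval k Z) n.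
Proof. by move=> KZ; rewrite /gval greedy_run_fadd // greedy_run_true; nonneg. Qed.

Lemma gval_fr1 m k :
  gval k.+1 (fr1 m) = (p * disc ^+ m)%:E + query_exp m (fun _ C => disc%:E * gval k C).
Proof.
rewrite gvalS ?nonempty_fr1 // smallest_present_fr1 fdel_fr1 /qval query_exp_reward;
  last by nonneg.
by congr (_ + _); apply: eq_query_exp => b C _; rewrite fadd0l.
Qed.

Lemma qvalE n Z x : qval n Z x = mix (disc%:E * gval n Z)
  ((disc ^+ x)%:E + disc%:E * E x (fun zs => gval n (fadd Z (children x zs)))).
Proof. by rewrite /qval /query_exp /= fadd0r add0e child_exp_affine; nonneg. Qed.

Lemma eq_exhaust K v v' n : (forall k, (0 < k)%N -> v k = v' k) ->
  exhaust K v n = exhaust K v' n.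
Proof. exact: eq_greedy_run. Qed.

Lemma le_exhaust K u u' n : (forall k, 0 <= u k) ->
  (forall k, (k <= n)%N -> u k <= u' k) -> exhaust K u n <= exhaust K u' n.
Proof. exact: le_greedy_run. Qed.

Lemma exhaustD K u w n : (forall k, 0 <= u k) -> (forall k, 0 <= w k) ->
  exhaust K (fun k => u k + w k) n = exhaust K u n + exhaust K w n.
Proof.
move=> u0 w0; elim: n K => [|n IH] K; first by rewrite add0e.
case nK: (nonempty_frontier K); last by rewrite !exhaust_empty ?nK.
rewrite !exhaustS // -?ge0_muleDr -?query_expD; try by nonneg.
by congr (_ * _); apply: eq_query_exp => b C _.
Qed.

Lemma exhaustZ K (c : R) u n : (0 <= c)%R -> (forall k, 0 <= u k) ->
  exhaust K (fun k => c%:E * u k) n = c%:E * exhaust K u n.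
Proof.
move=> c0 u0; elim: n K => [|n IH] K; first by rewrite mule0.
case nK: (nonempty_frontier K); last by rewrite !exhaust_empty ?nK.
rewrite !exhaustS //; last by nonneg.
rewrite muleCA -[c%:E * _]query_expZ; last by nonneg.
by congr (_ * _); apply: eq_query_exp => b C _.
Qed.

Lemma exhaust_child_exp K j (w : seq nat -> nat -> \bar R) n : (forall zs k, 0 <= w zs k) ->
  exhaust K (fun k => E j (fun zs => w zs k)) n = E j (fun zs => exhaust K (w zs) n).
Proof.
move=> w0; elim: n K => [|n IH] K; first by rewrite child_exp_cst.
case nK: (nonempty_frontier K).
  under [RHS]eq_child_exp => zs _ do rewrite exhaustS //.
  rewrite exhaustS ?child_expZ -?query_exp_child_exp; try by nonneg.
  by congr (_ * _); apply: eq_query_exp => b C _.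
rewrite exhaust_empty ?nK //; apply: eq_child_exp => zs _.
by rewrite exhaust_empty ?nK.
Qed.

Lemma exhaust_query_exp K x (w : bool -> fr -> nat -> \bar R) n :
  (forall b C k, 0 <= w b C k) ->
  exhaust K (fun k => query_exp x (fun b C => w b C k)) n =
  query_exp x (fun b C => exhaust K (w b C) n).
Proof.
move=> w0; rewrite /query_exp /mix exhaustD ?exhaustZ ?exhaust_child_exp //; nonneg.
Qed.

Definition delay (w : nat -> \bar R) (k : nat) : \bar R :=
  if k is k'.+1 then disc%:E * w k' else 0.

Lemma delay_ge0 w k : (forall k, 0 <= w k) -> 0 <= delay w k.
Proof. by case: k => /=; nonneg. Qed.
Local Hint Resolve delay_ge0 : ge0.

Lemma exhaust_delay K w n : w 0%N = 0 -> (forall k, 0 <= w k) ->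
  exhaust K (delay w) n = delay (exhaust K w) n.
Proof.
move=> w00 w0; elim: n K => [|n IH] K //.
case nK: (nonempty_frontier K); last first.
  rewrite exhaust_empty ?nK //=; case: n {IH} => [|n]; first by rewrite w00.
  by rewrite exhaust_empty ?nK.
rewrite exhaustS //=; last by nonneg.
under eq_query_exp => b C _ do rewrite IH.
case: n {IH} => [|n] /=; first by rewrite query_exp_cst ?mule0.
by rewrite exhaustS // query_expZ //; nonneg.
Qed.

Lemma exhaust_nonempty K v : nonempty_frontier K -> (forall k, 0 <= v k) ->
  exhaust K v = delay (fun k => query_exp (smallest_present K)
                        (fun _ C => exhaust (fadd (fdel K (smallest_present K)) C) v k)).
Proof. by move=> nK v0; apply: funext => -[|k] //=; rewrite exhaustS. Qed.

(* The subtrees of [K] and [K'] evolve independently. *)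
Lemma exhaustC K K' v n : (forall k, 0 <= v k) ->
  exhaust K (exhaust K' v) n = exhaust K' (exhaust K v) n.
Proof.
move=> v0; elim: n K K' => [|n IH] K K' //.
case nK: (nonempty_frontier K); last first.
  by rewrite exhaust_empty ?nK //; apply: eq_exhaust => k k0; rewrite exhaust_empty ?nK.
case nK': (nonempty_frontier K'); last first.
  by rewrite [RHS]exhaust_empty ?nK' //; apply: eq_exhaust => k k0; rewrite exhaust_empty ?nK'.
rewrite exhaustS; try by nonneg.
under eq_query_exp => b C _ do rewrite IH.
rewrite [exhaust K v]exhaust_nonempty // exhaust_delay ?query_exp_cst //=; last by nonneg.
by rewrite exhaust_query_exp //; nonneg.
Qed.

Lemma exhaust_le_cst K (c : R) u n : (0 <= c)%R -> (forall k, 0 <= u k) ->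
  (forall k, u k <= c%:E) -> exhaust K u n <= c%:E.
Proof.
move=> c0 u0 uc; elim: n K => [|n IH] K; first by rewrite lee_fin.
case nK: (nonempty_frontier K); last by rewrite exhaust_empty ?nK.
rewrite exhaustS //; apply: (@le_trans _ _ (disc%:E * c%:E)).
  apply: lee_wpmul2l; first by nonneg.
  rewrite -[leRHS](query_exp_cst (smallest_present K)) ?lee_fin //.
  by apply: le_query_exp => *; nonneg.
by rewrite -EFinM lee_fin ler_piMl // disc_le1.
Qed.

Lemma exhaust_fr1 K m v n : (forall k, 0 <= v k) ->
  exhaust K (exhaust (fr1 m) v) n =
  delay (fun k => query_exp m (fun _ C => exhaust K (exhaust C v) k)) n.
Proof.
move=> v0; rewrite [exhaust (fr1 m) v]exhaust_nonempty ?nonempty_fr1 //.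
rewrite smallest_present_fr1 fdel_fr1 exhaust_delay ?query_exp_cst //; try by nonneg.
congr delay; apply: funext => k.
transitivity (exhaust K (fun j => query_exp m (fun _ C => exhaust C v j)) k).
  by apply: eq_exhaust => j _; apply: eq_query_exp => b C _; rewrite fadd0l.
by apply: (@exhaust_query_exp K m (fun _ C => exhaust C v)) => *; nonneg.
Qed.

Section Exchange.
Variables (m h : 'I_T.+1) (Y : fr).
Hypotheses (m_lt_h : (m < h)%N) (Y_above : above m Y).

Let m_le_h : (m <= h)%N := ltnW m_lt_h.

(* What remains of recency at least [m] after querying the node of recency [h]: [Y], plus
   the children [e] of recency in [[m, h)] if the node was infected. *)
Definition rest (b : bool) (e : seq nat) : fr :=
  fadd Y (if b then upper_children m h e else fr0).

Definition rest_val (b : bool) (e : seq nat) (j : nat) : \bar R := gval j (rest b e).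

Lemma rest_above b e : above m (rest b e).
Proof.
apply: above_fadd => //; case: b => j //=; rewrite /upper_children.
by case: ifP => // /andP[].
Qed.

Lemma rest_val_ge0 b e j : 0 <= rest_val b e j.
Proof. exact: gval_ge0. Qed.
Local Hint Resolve rest_val_ge0 : ge0.

(* The greedy value of a lone node of recency [m] earning the benefit of recency [h]. *)
Definition high_reward_val (k : nat) : \bar R :=
  if k is k'.+1 then query_exp m (fun b C => reward b h + disc%:E * gval k' C) else 0.

Definition gap : R := p * (disc ^+ m - disc ^+ h).

Definition gap_val (k : nat) : \bar R := if k is _.+1 then gap%:E else 0.

Lemma gap_ge0 : (0 <= gap)%R.
Proof. by rewrite mulr_ge0 ?p_ge0 // subr_ge0 ler_wiXn2l ?disc_ge0 ?disc_le1. Qed.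

Lemma high_reward_val_ge0 k : 0 <= high_reward_val k.
Proof. by case: k => /=; nonneg. Qed.

Lemma gap_val_ge0 k : 0 <= gap_val k.
Proof. by case: k => //= k; rewrite lee_fin gap_ge0. Qed.
Local Hint Resolve high_reward_val_ge0 gap_val_ge0 : ge0.

Lemma gval_fr1_split k : gval k (fr1 m) = high_reward_val k + gap_val k.
Proof.
case: k => [|k]; first by rewrite adde0.
rewrite gval_fr1 /= query_exp_reward; last by nonneg.
by rewrite addeAC -EFinD /gap mulrBr (addrC (p * disc ^+ h)%R) subrK.
Qed.

Definition high_tail (n : nat) : \bar R :=
  query_exp m (fun b K => disc%:E * E (h - m) (fun e =>
    delay (fun k => query_exp m (fun _ K' => exhaust K (exhaust K' (rest_val b e)) k)) n)).

Definition low_tail (n : nat) : \bar R :=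
  query_exp m (fun _ K => disc%:E * delay (fun k => query_exp m (fun b' K' =>
    E (h - m) (fun e => exhaust K (exhaust K' (rest_val b' e)) k))) n).

Lemma qval_high_first n : qval n (fadd Y (fr1 m)) h =
  query_exp m (fun b K => reward b h + disc%:E * (gval n K + exhaust K high_reward_val n)) +
  query_exp m (fun _ K => disc%:E * exhaust K gap_val n) + high_tail n.
Proof.
rewrite /qval (query_exp_split m_le_h); last by nonneg.
rewrite /high_tail -!query_expD; try by nonneg.
apply: eq_query_exp => b K Km.
transitivity (E (h - m) (fun e =>
  (reward b h + disc%:E * (gval n K + exhaust K high_reward_val n)
   + disc%:E * exhaust K gap_val n) +
  disc%:E * exhaust K (exhaust (fr1 m) (rest_val b e)) n)).
  apply: eq_child_exp => e _.
  have -> : fadd (fadd Y (fr1 m)) (fadd K (if b then upper_children m h e else fr0)) =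
            fadd (fadd (rest b e) (fr1 m)) K.
    by apply: funext => i; rewrite /rest /fadd; lia.
  rewrite gval_fadd; last first.
    exact: below_precedes Km (above_fadd (@rest_above b e) (above_fr1 (leqnn m))).
  have -> : (fun k => gval k (fadd (rest b e) (fr1 m))) =
            high_reward_val \+ gap_val \+ exhaust (fr1 m) (rest_val b e).
    by apply: funext => k; rewrite gval_fadd ?gval_fr1_split //; exact/fr1_precedes/rest_above.
  by rewrite !exhaustD ?ge0_muleDr ?addeA; nonneg.
rewrite child_exp_affine; try by nonneg.
by congr (_ + _ * _); apply: eq_child_exp => e _; rewrite exhaust_fr1 //; nonneg.
Qed.

Definition after_high (k : nat) : \bar R :=
  query_exp m (fun b K => E (h - m) (fun e => exhaust K (rest_val b e) k)).

Lemma after_high_ge0 k : 0 <= after_high k.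
Proof. by rewrite /after_high; nonneg. Qed.
Local Hint Resolve after_high_ge0 : ge0.

Lemma qval_high_split k : qval k Y h = high_reward_val k.+1 + disc%:E * after_high k.
Proof.
rewrite /qval (query_exp_split m_le_h); last by nonneg.
rewrite [high_reward_val _]/= /after_high -query_expZ -?query_expD; try by nonneg.
apply: eq_query_exp => b K Km.
transitivity (E (h - m) (fun e =>
  (reward b h + disc%:E * gval k K) + disc%:E * exhaust K (rest_val b e) k)).
  apply: eq_child_exp => e _.
  have -> : fadd Y (fadd K (if b then upper_children m h e else fr0)) = fadd (rest b e) K.
    by apply: funext => i; rewrite /rest /fadd; lia.
  rewrite gval_fadd; last exact: below_precedes Km (@rest_above b e).
  by rewrite ge0_muleDr ?addeA; nonneg.
by rewrite child_exp_affine; nonneg.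
Qed.

(* The two tails describe the same state, reached by exhausting the children of the two
   queried nodes in opposite orders. *)
Lemma high_tail_low_tail n : high_tail n = low_tail n.
Proof.
rewrite /high_tail /low_tail; case: n => [|n] /=.
  by rewrite child_exp_cst // mule0 !query_exp_cst.
pose X K K' b e := exhaust K (exhaust K' (rest_val b e)) n.
have X_ge0 K K' b e : 0 <= X K K' b e by rewrite /X; nonneg.
transitivity (query_exp m (fun b K => (disc * disc)%:E *
                query_exp m (fun _ K' => E (h - m) (fun e => X K K' b e)))).
  apply: eq_query_exp => b K _.
  rewrite child_expZ -?query_exp_child_exp ?muleA -?EFinM //; nonneg.
transitivity (query_exp m (fun _ K => (disc * disc)%:E *
                query_exp m (fun b' K' => E (h - m) (fun e => X K K' b' e)))); last first.
  by apply: eq_query_exp => b K _; rewrite muleA -EFinM.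
rewrite !query_expZ; try by nonneg.
congr (_ * _); rewrite exchange_query_exp; last by nonneg.
apply: eq_query_exp => b K _; apply: eq_query_exp => b' K' _.
by apply: eq_child_exp => e _; rewrite /X exhaustC; nonneg.
Qed.

Lemma low_first_ge n : (forall k, (k < n)%N -> qval k Y h <= gval k.+1 (fadd Y (fr1 h))) ->
  query_exp m (fun b K => reward b m + disc%:E * (gval n K + exhaust K high_reward_val n)) +
  low_tail n <= qval n (fadd Y (fr1 h)) m.
Proof.
move=> IH; rewrite /low_tail -query_expD; try by nonneg.
apply: le_query_exp => [b K|b K Km]; first by nonneg.
rewrite gval_fadd; last first.
  exact: below_precedes Km (above_fadd Y_above (above_fr1 m_le_h)).
have exhaust_tail : exhaust K (high_reward_val \+ delay after_high) n =
    exhaust K high_reward_val n + delay (fun k => query_exp m (fun b' K' =>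
      E (h - m) (fun e => exhaust K (exhaust K' (rest_val b' e)) k))) n.
  rewrite exhaustD ?exhaust_delay; try by nonneg.
    congr (_ + delay _ n); apply: funext => k.
    rewrite exhaust_query_exp; last by nonneg.
    by apply: eq_query_exp => b' K' _; rewrite exhaust_child_exp; nonneg.
  by rewrite /after_high /exhaust /= child_exp_cst // query_exp_cst.
rewrite -addeA leeD2l // -ge0_muleDr ?lee_wpmul2l; try by nonneg.
rewrite -addeA -exhaust_tail leeD2l //.
apply: le_exhaust => [k|[|k] kn]; first by nonneg.
  by rewrite /= add0e.
by rewrite /= -qval_high_split; apply: IH.
Qed.

Lemma gap_after_le n : query_exp m (fun _ K => disc%:E * exhaust K gap_val n) <= gap%:E.
Proof.
have gap_ge0E : 0 <= gap%:E by rewrite lee_fin gap_ge0.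
rewrite -[leRHS](query_exp_cst m gap_ge0E).
apply: le_query_exp => [b K|b K _]; first by nonneg.
rewrite -[leRHS]mul1e; apply: lee_pmul; rewrite ?lee_fin ?disc_le1 //; try by nonneg.
by apply: exhaust_le_cst => [|k|[|k]]; rewrite ?lee_fin ?gap_ge0; nonneg.
Qed.

Lemma qval_exchange n :
  (forall k, (k < n)%N -> qval k Y h <= gval k.+1 (fadd Y (fr1 h))) ->
  qval n (fadd Y (fr1 m)) h <= qval n (fadd Y (fr1 h)) m.
Proof.
move=> IH; apply: le_trans (low_first_ge IH).
rewrite qval_high_first high_tail_low_tail leeD2r // !query_exp_reward; try by nonneg.
have -> : (p * disc ^+ m)%:E = (p * disc ^+ h)%:E + gap%:E.
  by rewrite -EFinD /gap mulrBr (addrC (p * disc ^+ h)%R) subrK.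
by rewrite [leRHS]addeAC; apply/leeD2l/gap_after_le.
Qed.

End Exchange.

Lemma qval_le_gval n f (x : 'I_T.+1) : (0 < f x)%N -> qval n (fdel f x) x <= gval n.+1 f.
Proof.
elim/ltn_ind: n f x => n IH f x fx.
have nf := nonempty_frontier_pos fx; have [fm fmin] := smallest_presentP nf.
rewrite gvalS //; set m := smallest_present f in fm fmin *.
have [->|xm] := eqVneq x m; first exact: lexx.
have m_lt_x : (m < x)%N.
  rewrite ltn_neqAle eq_sym xm leqNgt /=; apply/negP => /fmin fx0.
  by rewrite fx0 in fx.
set Y := fdel (fdel f m) x.
have Y_above : above m Y.
  move=> j Yj; rewrite leqNgt; apply/negP => /fmin fj0.
  by move: Yj; rewrite /Y /fdel fj0.
have -> : fdel f x = fadd Y (fr1 m) by apply: fdel_fr1_other; rewrite // eq_sym.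
have -> : fdel f m = fadd Y (fr1 x) by rewrite /Y fdelC; apply: fdel_fr1_other.
apply: qval_exchange => // k kn.
by have := IH k kn (fadd Y (fr1 x)) x; rewrite fdel_fadd_fr1 /fadd /fr1 eqxx addn1; apply.
Qed.

Lemma cur_frontier_rcons (f0 : fr) hist o :
  cur_frontier f0 (rcons hist o) = step_frontier (cur_frontier f0 hist) o.
Proof. by rewrite /cur_frontier foldl_rcons. Qed.

Lemma qval_discount t n Z x : (disc ^+ t)%:E * qval n Z x =
  mix ((disc ^+ t.+1)%:E * gval n Z) ((expR (- beta * (x + t)%:R))%:E +
       E x (fun zs => (disc ^+ t.+1)%:E * gval n (fadd Z (children x zs)))).
Proof.
rewrite qvalE -mixZ ?muleA -?EFinM -?exprSr; try by nonneg.
rewrite ge0_muleDr; try by nonneg.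
by rewrite -EFinM -exprD addnC expR_disc muleA -EFinM -exprSr child_expZ; nonneg.
Qed.

Lemma value_n_ge0 (pol : policy T) f0 n hist : 0 <= value_n D p beta pol f0 n hist.
Proof.
elim: n hist => [|n IH] hist //=; case: ifP => // _.
by have := expR_ge0 (- beta * (pol f0 hist + size hist)%:R); rewrite -lee_fin; nonneg.
Qed.
Local Hint Resolve value_n_ge0 : ge0.

Lemma greedy_policy_valid : valid_policy (@greedy_policy T).
Proof. by move=> f0 hist /smallest_presentP[]. Qed.

Lemma value_n_greedy f0 n hist : value_n D p beta (@greedy_policy T) f0 n hist =
  (disc ^+ size hist)%:E * gval n (cur_frontier f0 hist).
Proof.
elim: n hist => [|n IH] hist /=; first by rewrite mule0.
case nf: (nonempty_frontier _); last by rewrite /gval /= nf mule0.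
rewrite gvalS // qval_discount /mix IH size_rcons cur_frontier_rcons step_frontierE fadd0r.
by congr (_ + _ * (_ + _)); apply: eq_child_exp => zs _;
  rewrite IH size_rcons cur_frontier_rcons step_frontierE.
Qed.

Lemma value_n_le_greedy (pol : policy T) f0 n hist : valid_policy pol ->
  value_n D p beta pol f0 n hist <= (disc ^+ size hist)%:E * gval n (cur_frontier f0 hist).
Proof.
move=> pol_valid; elim: n hist => [|n IH] hist /=; first by rewrite mule0.
case nf: (nonempty_frontier _); last by nonneg.
apply: (@le_trans _ _ ((disc ^+ size hist)%:E *
  qval n (fdel (cur_frontier f0 hist) (pol f0 hist)) (pol f0 hist))); last first.
  by apply: lee_wpmul2l; [nonneg|exact/qval_le_gval/pol_valid].
rewrite qval_discount; apply: le_mix; try by nonneg.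
  by apply: le_trans (IH _) _; rewrite size_rcons cur_frontier_rcons step_frontierE fadd0r.
apply: leeD2l; apply: le_child_exp => [zs|zs]; first by nonneg.
by apply: le_trans (IH _) _; rewrite size_rcons cur_frontier_rcons step_frontierE.
Qed.

Lemma greedy_optimal (pol : policy T) f0 : valid_policy pol ->
  total_value D p beta pol f0 <= total_value D p beta (@greedy_policy T) f0.
Proof.
move=> pol_valid; apply: ge_ereal_sup => _ [n _ <-].
apply: le_trans (value_n_le_greedy f0 n [::] pol_valid) _.
by rewrite -value_n_greedy; apply: ereal_sup_ubound; exists n.
Qed.

End Tracing.

Theorem theorem5p1 (R : realType) (T : nat) (D : nat -> R) (p beta : R) :
  (forall k, 0 <= D k) ->
  (\sum_(k <oo) (D k)%:E = 1)%E ->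
  0 < p -> p <= 1 ->
  0 < beta ->
  valid_policy (@greedy_policy T) /\
  (forall (pol : policy T), valid_policy pol ->
     forall f0 : frontier T,
       (total_value D p beta pol f0 <= total_value D p beta (@greedy_policy T) f0)%E).
Proof.
move=> D_ge0 D_sum1 p_gt0 p_le1 beta_gt0; split; first exact: greedy_policy_valid.
by move=> pol pol_valid f0; exact: greedy_optimal.
Qed.
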